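(* Let $C=\{c_1,\dots,c_m\}\subset\mathbb{R}$ with $c_1\le c_2\le\dots\le c_m$, let $\mathcal{I}$ be a finite set of closed intervals in $\mathbb{R}$, and let $f\ge0$ be an integer such that every interval $I\in\mathcal{I}$ satisfies $|I\cap C|>f$. Then $T\subseteq C$ is an $f$-tolerant hitting set of $\mathcal{I}$ if and only if $|T\cap C_{i,j}|\ge\delta_{i,j}(f)$ for all $1\le i\le j\le m$.
   Context: A set $X\subseteq C$ hits $\mathcal{I}$ (is a hitting set) if every interval of $\mathcal{I}$ contains a point of $X$. $T\subseteq C$ is an $f$-tolerant hitting set of $\mathcal{I}$ if for every $J\subseteq C$ with $|J|\le f$ there exists $R\subseteq C\setminus J$ with $|(T\setminus J)\cup R|\le|T|$ such that $(T\setminus J)\cup R$ hits $\mathcal{I}$. For a set of points $X$, a set of intervals is $X$-disjoint if every point of $X$ lies in at most one of its intervals. For $1\le i\le j\le m$: $C_{i,j}=\{c_i,\dots,c_j\}$; $\mathcal{I}_{i,j}=\{I\in\mathcal{I}: I\cap C\subseteq C_{i,j}\}$; for $J\subseteq C_{i,j}$, $\delta_{i,j}(J)$ is the maximum size of a $(C_{i,j}\setminus J)$-disjoint subset of $\mathcal{I}_{i,j}$; and $\delta_{i,j}(f)=\max_{J\subseteq C_{i,j},|J|\le f}\delta_{i,j}(J)$. (In the application, $\mathcal{I}$ consists of the intervals of length $2r$ centered at the voters.) *)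

From HB Require Import structures.
From mathcomp Require Import all_boot all_order all_algebra.
From mathcomp Require Import finmap.
Set Implicit Arguments. Unset Strict Implicit. Unset Printing Implicit Defensive.
Import Order.TTheory GRing.Theory Num.Theory.
Local Open Scope ring_scope.
Local Open Scope fset_scope.

Section Defs.
Variables (R : realFieldType) (m : nat) (c : 'I_m -> R).

(* The candidate set C = {c_0, ..., c_(m-1)} is represented by its indices 'I_m;
   subsets of C are {set 'I_m}.  A closed interval [a,b] is a pair (a,b). *)
Definition in_itv (I : R * R) (x : R) : bool := (I.1 <= x) && (x <= I.2).

Definition pts (I : R * R) : {set 'I_m} := [set k | in_itv I (c k)].

Definition hits (Ic : {fset R * R}) (X : {set 'I_m}) : Prop :=
  forall I, I \in Ic -> exists2 k, k \in X & in_itv I (c k).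

Definition tolerant (Ic : {fset R * R}) (f : nat) (T : {set 'I_m}) : Prop :=
  forall J : {set 'I_m}, (#|J| <= f)%N ->
    exists Rs : {set 'I_m}, [/\ Rs \subset ~: J,
      (#|(T :\: J) :|: Rs| <= #|T|)%N & hits Ic ((T :\: J) :|: Rs)].

Definition Cij (i j : 'I_m) : {set 'I_m} := [set k : 'I_m | (i <= k <= j)%N].

Definition Iij (Ic : {fset R * R}) (i j : 'I_m) : {fset R * R} :=
  [fset I in Ic | pts I \subset Cij i j].

Definition disjointb (X : {set 'I_m}) (S : {fset R * R}) : bool :=
  [forall k in X, #|[set I : S | in_itv (val I) (c k)]| <= 1]%N.

Definition deltaJ (Ic : {fset R * R}) (i j : 'I_m) (J : {set 'I_m}) : nat :=
  \max_(S <- fpowerset (Iij Ic i j) | disjointb (Cij i j :\: J) S) #|` S|.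

Definition deltaf (Ic : {fset R * R}) (i j : 'I_m) (f : nat) : nat :=
  \max_(J : {set 'I_m} | (J \subset Cij i j) && (#|J| <= f)%N) deltaJ Ic i j J.

End Defs.

From Pilot Require Import Defs.
From HB Require Import structures.
From mathcomp Require Import all_boot all_order all_algebra.
From mathcomp Require Import finmap zify.
Import Order.TTheory GRing.Theory Num.Theory.
Set Implicit Arguments. Unset Strict Implicit. Unset Printing Implicit Defensive.
Local Open Scope ring_scope.
Local Open Scope fset_scope.

(* Necessity: after deleting J and adding R, the new set keeps T \ C_{i,j}, so it
   has at most |T ∩ C_{i,j}| points in C_{i,j}; yet it must hit the members of a
   (C_{i,j} \ J)-disjoint subfamily of I_{i,j} in distinct points of C_{i,j} \ J.
   Sufficiency: an interval meets C in a run of consecutive points, so an interval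
   missed by T \ J lies in a gap between consecutive points of T \ J.  Inside a
   gap, greedy stabbing (always stab the interval whose last point outside J is
   leftmost) hits all these intervals with no more points than some
   (gap \ J)-disjoint family of them has members, which is at most
   δ(f) <= |T ∩ gap| = |T ∩ J ∩ gap|.  Summing over the gaps, the repair costs at
   most |T ∩ J|. *)

Lemma card_setI_leq (U : finType) (T X C : {set U}) :
  T :\: C \subset X -> (#|X| <= #|T|)%N -> (#|X :&: C| <= #|T :&: C|)%N.
Proof.
move=> TCX leXT; rewrite -(leq_add2r #|T :\: C|) cardsID.
apply: leq_trans leXT; rewrite -(cardsID C X) leq_add2l subset_leq_card //.
apply/subsetP => k kTC; rewrite inE (subsetP TCX) // andbT.
by move: kTC; rewrite inE => /andP[].
Qed.

Definition ord_convex (m : nat) (B : {set 'I_m}) :=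
  forall a b k : 'I_m, a \in B -> b \in B -> (a <= k <= b)%N -> k \in B.

Section IntervalStabbing.
Variables (m : nat) (K : choiceType) (A : K -> {set 'I_m}) (P : {set 'I_m}).
Hypothesis A_convex : forall I, ord_convex (A I).

Definition disjoint_on (S : {fset K}) := forall I1 I2, I1 \in S -> I2 \in S ->
  forall k, k \in P -> k \in A I1 -> k \in A I2 -> I1 = I2.

Definition last_in (I : K) : nat := \max_(k in A I :&: P) val k.

Lemma leq_last_in I k : k \in A I -> k \in P -> (k <= last_in I)%N.
Proof. by move=> kA kP; apply: (@leq_bigmax_cond _ _ val); rewrite inE kA. Qed.

Lemma last_in_attained I : A I :&: P != set0 ->
  exists2 k, k \in A I :&: P & val k = last_in I.
Proof. by rewrite /last_in -card_gt0 => /(eq_bigmax_cond val) [k kAP ->]; exists k. Qed.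

Lemma leftmost_last_in (F : {fset K}) I1 : I1 \in F ->
  exists2 I0, I0 \in F & forall I, I \in F -> (last_in I0 <= last_in I)%N.
Proof.
move=> I1F; have F_last : exists x, has (fun I => last_in I == x) F.
  by exists (last_in I1); apply/hasP; exists I1.
have [x /hasP[I0 I0F /eqP last_I0] x_min] := ex_minnP F_last.
by exists I0 => // I IF; rewrite last_I0 x_min //; apply/hasP; exists I.
Qed.

Lemma interval_stabbing (F : {fset K}) :
  (forall I, I \in F -> A I :&: P != set0) ->
  exists (X : {set 'I_m}) (S : {fset K}), [/\ X \subset P, S `<=` F,
    forall I, I \in F -> exists2 k, k \in X & k \in A I,
    (#|X| <= #|` S|)%N & disjoint_on S].
Proof.
have [n] := ubnP #|`F|; elim: n F => // n IHn F ltFn FP.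
have [->|[I1 I1F]] := fset_0Vmem F.
  by exists set0, fset0; split; rewrite ?sub0set ?fsub0set ?cards0 // => I; rewrite inE.
have [I0 I0F I0_min] := leftmost_last_in I1F.
have [k0 /setIP[k0A k0P] last_k0] := last_in_attained (FP I0 I0F).
pose F' := [fset I in F | k0 \notin A I].
have I0F' : I0 \notin F' by rewrite !inE k0A andbF.
have ltF'n : (#|`F'| < n)%N.
  suff : (#|`F'| < #|`F|)%N by lia.
  apply: leq_ltn_trans (fproper_ltn_card (fproperD1 I0F)).
  apply/fsubset_leq_card/fsubsetP => I; rewrite !inE => /andP[-> k0I].
  by rewrite andbT; apply: contraNneq k0I => ->.
have F'P I : I \in F' -> A I :&: P != set0 by rewrite !inE => /andP[/FP].
have [X [S [XP SF' Xhit leXS disjS]]] := IHn F' ltF'n F'P.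
have I0S : I0 \notin S by apply: contra I0F' => /(fsubsetP SF').
(* A common point would lie left of k0 while J reaches its own last point, which is
   right of k0 by the choice of I0; convexity would then put k0 in A J. *)
have I0_apart J k : J \in S -> k \in P -> k \in A I0 -> k \notin A J.
  move=> JS kP kI0; apply/negP => kJ.
  have /andP[JF k0J] : (J \in F) && (k0 \notin A J).
    by have := fsubsetP SF' J JS; rewrite !inE.
  have [kJ' /setIP[kJ'A _] last_kJ'] := last_in_attained (FP J JF).
  have k0_le_kJ' : (k0 <= kJ')%N by rewrite last_k0 last_kJ' I0_min.
  have k_le_k0 : (k <= k0)%N by rewrite last_k0 leq_last_in.
  by rewrite (A_convex kJ kJ'A) ?k_le_k0 in k0J.
exists (k0 |: X), (I0 |` S); split.
- by rewrite subUset sub1set k0P XP.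
- by rewrite fsubUset fsub1set I0F (fsubset_trans SF') // fset_sub.
- move=> I IF; have [k0I|k0I] := boolP (k0 \in A I).
    by exists k0; rewrite ?setU11.
  have [k kX kI] : exists2 k, k \in X & k \in A I by apply: Xhit; rewrite !inE IF.
  by exists k; rewrite ?setU1r.
- by rewrite cardsU1 cardfsU1 I0S leq_add ?leq_b1.
- move=> J1 J2; rewrite !inE => /orP[/eqP->|J1S] /orP[/eqP->|J2S] k kP k1 k2 //.
  + by rewrite (negPf (I0_apart _ _ J2S kP k1)) in k2.
  + by rewrite (negPf (I0_apart _ _ J1S kP k2)) in k1.
  + exact: disjS k kP k1 k2.
Qed.
End IntervalStabbing.

Section Intervals.
Variables (R : realFieldType) (m : nat) (c : 'I_m -> R).

Lemma disjointbP (Q : {set 'I_m}) (S : {fset R * R}) :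
  reflect (forall I1 I2 : R * R, I1 \in S -> I2 \in S -> forall k, k \in Q ->
             k \in pts c I1 -> k \in pts c I2 -> I1 = I2)
          (disjointb c Q S).
Proof.
apply: (iffP forallP) => [disjS I1 I2 I1S I2S k kQ kI1 kI2 | disjS k].
  have /implyP/(_ kQ)/card_le1_eqP := disjS k.
  by move=> /(_ [` I1S] [` I2S]); rewrite !inE in kI1 kI2 * => /(_ kI1 kI2) [].
apply/implyP => kQ; apply/card_le1_eqP => I1 I2; rewrite !inE => kI1 kI2.
by apply: val_inj; apply: (disjS _ _ (fsvalP I2) (fsvalP I1) k); rewrite ?inE.
Qed.

Lemma leq_card_disjointb (Q X : {set 'I_m}) (S : {fset R * R}) :
  disjointb c Q S ->
  (forall I, I \in S -> exists2 k, k \in X :&: Q & k \in pts c I) ->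
  (#|` S| <= #|X :&: Q|)%N.
Proof.
move=> /disjointbP disjS hitS.
have pick_point (I : S) : exists k, (k \in X :&: Q) && (k \in pts c (val I)).
  by have [k kXQ kI] := hitS _ (fsvalP I); exists k; rewrite kXQ.
pose g (I : S) := xchoose (pick_point I).
have g_inj : injective g.
  move=> I1 I2 eq_g; apply: val_inj.
  have /andP[/setIP[_ kQ] kI1] := xchooseP (pick_point I1).
  have /andP[_ kI2] := xchooseP (pick_point I2).
  by apply: disjS (fsvalP I1) (fsvalP I2) _ kQ kI1 _; rewrite -/(g I1) eq_g.
rewrite cardfE -(card_imset _ g_inj) subset_leq_card //.
by apply/subsetP => _ /imsetP[I _ ->]; have /andP[] := xchooseP (pick_point I).
Qed.

Lemma leq_card_deltaf (Ic S : {fset R * R}) (i j : 'I_m) (J : {set 'I_m}) f :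
  S `<=` Iij c Ic i j -> disjointb c (Cij i j :\: J) S -> (#|J| <= f)%N ->
  (#|` S| <= deltaf c Ic i j f)%N.
Proof.
move=> SI disjS leJf.
apply: leq_trans (leq_bigmax_cond (J :&: Cij i j) _); last first.
  by rewrite subsetIr (leq_trans _ leJf) // subset_leq_card // subsetIl.
rewrite /deltaJ; apply: leq_bigmax_seq; first by rewrite fpowersetE.
by rewrite setDIr setDv setU0.
Qed.

Lemma pts_convex : (forall i j : 'I_m, (i <= j)%N -> c i <= c j) ->
  forall I, ord_convex (pts c I).
Proof.
move=> c_le I a b k; rewrite !inE /Defs.in_itv => /andP[Ia _] /andP[_ Ib] /andP[ak kb].
by rewrite (le_trans Ia (c_le _ _ ak)) (le_trans (c_le _ _ kb) Ib).
Qed.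

Lemma tolerant_deltaf (Ic : {fset R * R}) f T : tolerant c Ic f T ->
  forall i j, (deltaf c Ic i j f <= #|T :&: Cij i j|)%N.
Proof.
move=> tolT i j; apply/bigmax_leqP => J /andP[JC leJf].
apply/bigmax_leqP_seq => S; rewrite fpowersetE => SI disjS.
have [Rs [RsJ leXT hitX]] := tolT J leJf.
set X := (T :\: J) :|: Rs.
have XJ : X \subset ~: J.
  by rewrite subUset RsJ andbT; apply/subsetP => k; rewrite !inE => /andP[].
apply: leq_trans (card_setI_leq _ leXT); last first.
  apply/subsetP => k; rewrite !inE => /andP[kC kT]; rewrite kT andbT.
  by apply/orP; left; apply: contra kC => /(subsetP JC); rewrite inE.
apply: leq_trans (leq_card_disjointb (X := X) disjS _) _.
  move=> I IS; have := fsubsetP SI I IS; rewrite !inE => /andP[IIc /subsetP IC].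
  have [k kX kI] := hitX I IIc; exists k; last by rewrite inE.
  have kC : k \in Cij i j by apply: IC; rewrite inE.
  have kJ : k \notin J by have := subsetP XJ k kX; rewrite inE.
  by rewrite inE kX inE kJ kC.
by rewrite subset_leq_card // setIS // subsetDl.
Qed.

End Intervals.

Section Sufficiency.
Variables (R : realFieldType) (m : nat) (c : 'I_m -> R).
Variables (Ic : {fset R * R}) (f : nat) (T J : {set 'I_m}).
Hypothesis c_le : forall i j : 'I_m, (i <= j)%N -> c i <= c j.
Hypothesis Ic_wide : forall I, I \in Ic -> (f < #|pts c I|)%N.
Hypothesis T_deltaf : forall i j : 'I_m, (i <= j)%N ->
  (deltaf c Ic i j f <= #|T :&: Cij i j|)%N.
Hypothesis leJf : (#|J| <= f)%N.

Definition window (q u : nat) : {set 'I_m} := [set k : 'I_m | q <= k < u]%N.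

Definition missed (I : R * R) := [disjoint T :\: J & pts c I]%B.

Definition repairable q u := exists X : {set 'I_m}, [/\ X \subset ~: J,
  forall I, I \in Ic -> missed I -> pts c I \subset window q u ->
    exists2 k, k \in X & k \in pts c I
  & (#|X| <= #|T :&: J :&: window q u|)%N].

Lemma pts_meets_compl I : I \in Ic -> pts c I :&: ~: J != set0.
Proof.
move=> /Ic_wide ltf; rewrite setI_eq0 disjoints_subset setCK.
by apply: contraTN ltf => /subset_leq_card leJ; rewrite -leqNgt (leq_trans leJ).
Qed.

Lemma window_Cij q u (k : 'I_m) : k \in window q u -> (u <= m)%N ->
  exists i j : 'I_m, [/\ (i <= j)%N & window q u = Cij i j].
Proof.
rewrite inE => /andP[qk ku] um.
have qm : (q < m)%N by apply: leq_ltn_trans qk _.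
have um' : (u.-1 < m)%N by lia.
exists (Ordinal qm), (Ordinal um'); split; first by rewrite /=; lia.
by apply/setP => l; rewrite !inE /=; lia.
Qed.

Lemma gap_repairable q u : (u <= m)%N -> [disjoint window q u & T :\: J]%B ->
  repairable q u.
Proof.
move=> um gap.
pose G := [fset I in Ic | pts c I \subset window q u].
have [|X [S [XJ SG hitX leXS disjS]]] :=
  interval_stabbing (pts_convex c_le) (P := ~: J) (F := G).
  by move=> I; rewrite !inE => /andP[/pts_meets_compl].
exists X; split => //.
  by move=> I IIc _ Iw; apply: hitX; rewrite !inE IIc.
apply: leq_trans leXS _.
have [->|[I0 I0S]] := fset_0Vmem S; first by rewrite cardfs0.
have /andP[I0Ic I0w] : (I0 \in Ic) && (pts c I0 \subset window q u).
  by have := fsubsetP SG I0 I0S; rewrite !inE.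
have /set0Pn[k0 /setIP[k0I0 _]] := pts_meets_compl I0Ic.
have [i [j [le_ij wij]]] := window_Cij (subsetP I0w k0 k0I0) um.
have -> : T :&: J :&: window q u = T :&: Cij i j.
  rewrite -wij; apply/setP => k; rewrite !inE.
  case kw: (q <= k < u)%N; rewrite ?andbF // !andbT.
  have /(disjointFr gap) : k \in window q u by rewrite inE kw.
  by rewrite !inE; case: (k \in T); case: (k \in J).
apply: leq_trans (T_deltaf le_ij); apply: leq_card_deltaf leJf.
  apply/fsubsetP => I IS; have := fsubsetP SG I IS; rewrite !inE -wij.
  by move=> /andP[-> ->].
apply/disjointbP => I1 I2 I1S I2S k; rewrite inE => /andP[kJ _].
by apply: disjS; rewrite // inE.
Qed.

Lemma repairable_split q u (k0 : 'I_m) : k0 \in T :\: J -> k0 \in window q u ->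
  repairable q k0 -> repairable k0.+1 u -> repairable q u.
Proof.
rewrite [k0 \in window _ _]inE => k0TJ /andP[qk0 k0u].
move=> [X1 [X1J hit1 le1]] [X2 [X2J hit2 le2]].
exists (X1 :|: X2); split.
- by rewrite subUset X1J X2J.
- move=> I IIc missI Iw.
  have [Iw1|/subsetPn[k1 k1I k1w]] := boolP (pts c I \subset window q k0).
    by have [k kX kI] := hit1 I IIc missI Iw1; exists k => //; rewrite inE kX.
  suff Iw2 : pts c I \subset window k0.+1 u.
    by have [k kX kI] := hit2 I IIc missI Iw2; exists k => //; rewrite inE kX orbT.
  have k0I : k0 \notin pts c I by rewrite (disjointFr missI k0TJ).
  have k0k1 : (k0 <= k1)%N by move: k1w (subsetP Iw k1 k1I); rewrite !inE; lia.
  apply/subsetP => k kI; move: (subsetP Iw k kI); rewrite !inE => /andP[_ ->].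
  rewrite andbT ltnNge; apply: contra k0I => kk0.
  by apply: (pts_convex c_le kI k1I); rewrite kk0.
- rewrite cardsU (leq_trans (leq_subr _ _)) //.
  rewrite -(cardsID (window q k0) (T :&: J :&: window q u)).
  apply: leq_add; [apply: leq_trans le1 _ | apply: leq_trans le2 _];
    apply/subset_leq_card/subsetP => k; rewrite !inE; lia.
Qed.

Lemma repairable_window q u : (u <= m)%N -> repairable q u.
Proof.
have [n] := ubnP #|(T :\: J) :&: window q u|.
elim: n q u => // n IHn q u ltn um.
have [gap|/set0Pn[k0 /setIP[k0TJ k0w]]] := eqVneq ((T :\: J) :&: window q u) set0.
  by apply: gap_repairable um _; rewrite disjoint_sym -setI_eq0 gap.
have fewer a b : window a b \subset window q u -> k0 \notin window a b ->
    (#|(T :\: J) :&: window a b| < n)%N.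
  move=> sub_ab k0ab.
  suff : (#|(T :\: J) :&: window a b| < #|(T :\: J) :&: window q u|)%N by lia.
  apply/proper_card/properP; split; first exact: setIS.
  by exists k0; rewrite inE ?k0TJ // negb_and k0ab orbT.
have k0m : (k0 <= m)%N := ltnW (ltn_ord k0).
apply: (repairable_split k0TJ k0w); apply: IHn => //; apply: fewer;
  rewrite ?inE ?ltnn ?ltnSn ?andbF //; apply/subsetP => k; move: k0w; rewrite !inE; lia.
Qed.

Lemma deltaf_repair : exists Rs : {set 'I_m}, [/\ Rs \subset ~: J,
  (#|(T :\: J) :|: Rs| <= #|T|)%N & hits c Ic ((T :\: J) :|: Rs)].
Proof.
have [X [XJ hitX leX]] := repairable_window 0 (leqnn m).
exists X; split => //.
  rewrite cardsU (leq_trans (leq_subr _ _)) // -(cardsID J T) [X in (_ <= X)%N]addnC.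
  by rewrite leq_add2l (leq_trans leX) // subset_leq_card // subsetIl.
move=> I IIc; have [missI|] := boolP (missed I).
  have [|k kX kI] := hitX I IIc missI; first by apply/subsetP => k _; rewrite inE /=.
  by exists k; [rewrite inE kX orbT | rewrite inE in kI].
rewrite /missed -setI_eq0 => /set0Pn[k /setIP[kTJ kI]].
by exists k; [rewrite inE kTJ | rewrite inE in kI].
Qed.

End Sufficiency.

Theorem lemma3 (R : realFieldType) (m : nat) (c : 'I_m -> R)
    (Ic : {fset R * R}) (f : nat) (T : {set 'I_m}) :
  (forall i j : 'I_m, (i < j)%N -> c i < c j) ->
  (forall I, I \in Ic -> (f < #|pts c I|)%N) ->
  tolerant c Ic f T <->
  (forall i j : 'I_m, (i <= j)%N -> (deltaf c Ic i j f <= #|T :&: Cij i j|)%N).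
Proof.
move=> c_lt Ic_wide.
have c_le (i j : 'I_m) : (i <= j)%N -> c i <= c j.
  by rewrite leq_eqVlt => /orP[/eqP/val_inj->//|/c_lt/ltW].
split=> [tolT i j _|T_deltaf J leJf]; first exact: tolerant_deltaf.
exact: deltaf_repair c_le Ic_wide T_deltaf leJf.
Qed.
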